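(* For all $w_1\in\mathcal{H}^0$ and $w_2\in\mathcal{H}^{\ge2}$, $Z^\diamondsuit(w_1*w_2)=Z^\diamondsuit(w_1)Z^\diamondsuit(w_2)$ (termwise product in $\mathbb{Q}^{\mathbb{N}}$).
   Context: $[n]=\{1,\dots,n\}$. For $N\ge1$ and an admissible index (tuple of positive integers, nonempty, last entry $\ge2$) $\boldsymbol{k}=(k_1,\dots,k_r)$: $[r]^1_{\boldsymbol{k}}=\{i:k_i=1\}$, $S_{r,N}(A)=\{(n_1,\dots,n_r)\in[N-1]^r: n_i\le n_{i+1}\ (i\in A),\ n_i<n_{i+1}\ (i\in[r-1]\setminus A)\}$, $\zeta^\diamondsuit_N(\boldsymbol{k})=\sum_{A\subset[r]^1_{\boldsymbol{k}}}\sum_{S_{r,N}(A)}\prod_{i\in A}(N-n_i)^{-1}\prod_{i\notin A}n_i^{-k_i}$, $\zeta^\diamondsuit(\boldsymbol{k})=(\zeta^\diamondsuit_N(\boldsymbol{k}))_{N\ge1}$. $\mathcal{H}=\mathbb{Q}\langle x,y\rangle$, $\mathcal{H}^1=\mathbb{Q}+y\mathcal{H}$, $\mathcal{H}^0=\mathbb{Q}+y\mathcal{H}x$, $\mathcal{H}^{\ge2}=\mathbb{Q}+yx\,\mathbb{Q}\langle x,yx\rangle$, $e_k=yx^{k-1}$; $Z^\diamondsuit\colon\mathcal{H}^0\to\mathbb{Q}^{\mathbb{N}}$ is $\mathbb{Q}$-linear with $Z^\diamondsuit(1)=(1)_N$, $Z^\diamondsuit(e_{k_1}\cdots e_{k_r})=\zeta^\diamondsuit(k_1,\dots,k_r)$.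 Harmonic product $*$ on $\mathcal{H}^1$: $\mathbb{Q}$-bilinear, $w*1=1*w=w$, $w_1e_{k_1}*w_2e_{k_2}=(w_1*w_2e_{k_2})e_{k_1}+(w_1e_{k_1}*w_2)e_{k_2}+(w_1*w_2)e_{k_1+k_2}$ for words $w_1,w_2$. *)

From mathcomp Require Import all_boot all_order all_algebra.
Set Implicit Arguments. Unset Strict Implicit. Unset Printing Implicit Defensive.
Import Order.TTheory GRing.Theory Num.Theory.
Local Open Scope ring_scope.

(* An index (k_1,...,k_r) is a seq nat; it encodes the word e_{k_1}...e_{k_r}
   of H^1 (every word of H^1 is uniquely such a product with all k_i >= 1). *)

(* zeta^diamond_N(k), indices 0-based: i in 'I_r stands for i+1. *)
Definition zetaD (k : seq nat) (N : nat) : rat :=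
  let r := size k in
  \sum_(A : {set 'I_r} | A \subset [set i : 'I_r | nth 0%N k i == 1%N])
   \sum_(n : {ffun 'I_r -> 'I_N} |
          [forall i, (0 < n i)%N] &&
          [forall i : 'I_r, forall j : 'I_r,
             (val j == (val i).+1) ==>
             (if i \in A then (n i <= n j)%N else (n i < n j)%N)])
     ((\prod_(i in A) ((N - n i)%:R)^-1) *
      (\prod_(i | i \notin A) (((n i)%:R) ^+ (nth 0%N k i))^-1)).

Definition zetaDseq (k : seq nat) : nat -> rat := fun N => zetaD k N.

(* Harmonic product of words, on reversed words (head = last letter):
   u = k1 :: u', v = k2 :: v' encode w1 e_{k1}, w2 e_{k2}. *)
Fixpoint hrev (u v : seq nat) {struct u} : seq (seq nat) :=
  match u with
  | [::] => [:: v]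
  | a :: u' =>
    let fix aux (v : seq nat) : seq (seq nat) :=
      match v with
      | [::] => [:: u]
      | b :: v' =>
          [seq a :: w | w <- hrev u' v] ++ [seq b :: w | w <- aux v']
          ++ [seq (a + b)%N :: w | w <- hrev u' v']
      end in aux v
  end.

(* harmonic product of two words: the list of words (with multiplicity)
   whose sum is u * v. *)
Definition harm_word (u v : seq nat) : seq (seq nat) :=
  [seq rev w | w <- hrev (rev u) (rev v)].

(* Elements of H^1 as formal Q-linear combinations of words. *)
Definition lc := seq (rat * seq nat).

Definition harm (w1 w2 : lc) : lc :=
  flatten [seq [seq (p.1 * q.1, w) | w <- harm_word p.2 q.2] | p <- w1, q <- w2].

Definition ZD (w : lc) : nat -> rat :=
  fun N => \sum_(p <- w) p.1 * zetaDseq p.2 N.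

Definition word_H0 (s : seq nat) : bool :=
  (s == [::]) || (all (fun k => 0 < k)%N s && (2 <= last 0%N s)%N).
(* word in H^{>=2} = Q + yx Q<x,yx>: all k_i >= 2. *)
Definition word_H2 (s : seq nat) : bool := all (fun k => 2 <= k)%N s.

Definition in_H0 (w : lc) : bool := all (fun p => word_H0 p.2) w.
Definition in_H2 (w : lc) : bool := all (fun p => word_H2 p.2) w.

(* Peeling off the last summation variable writes zeta^diamond_N(k) as a recursion
   along the reversed index: if m is the variable peeled just before, a letter k
   contributes sum_(0<x<m) x^-k (...) and, when k = 1, also sum_(0<x<=m) (N-x)^-1 (...).
   As every letter of w2 is >= 2, its factor is a plain strict nested sum over y < m.
   Splitting the (x, y) square into y < x and x <= y, with the strict diagonal x = y
   set apart (a diamond term keeps its diagonal on the side x <= y), reproduces term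
   by term the three summands of the recursive definition of the harmonic product,
   so the identity follows by induction on both words. *)

From mathcomp Require Import all_boot all_algebra zify ring.
Set Implicit Arguments. Unset Strict Implicit. Unset Printing Implicit Defensive.
Import GRing.Theory.
Local Open Scope ring_scope.

Section FfunRcons.
Variable r : nat.

Definition ffun_rcons (T : Type) (g : {ffun 'I_r -> T}) (x : T) : {ffun 'I_r.+1 -> T} :=
  [ffun i => if unlift ord_max i is Some j then g j else x].

Definition set_rcons (A : {set 'I_r}) (b : bool) : {set 'I_r.+1} :=
  [set i | if unlift ord_max i is Some j then j \in A else b].

Lemma ffun_rcons_lift T (g : {ffun 'I_r -> T}) x j : ffun_rcons g x (lift ord_max j) = g j.
Proof. by rewrite ffunE liftK. Qed.

Lemma ffun_rcons_max T (g : {ffun 'I_r -> T}) x : ffun_rcons g x ord_max = x.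
Proof. by rewrite ffunE unlift_none. Qed.

Lemma set_rcons_lift A b j : (lift ord_max j \in set_rcons A b) = (j \in A).
Proof. by rewrite inE liftK. Qed.

Lemma set_rcons_max A b : (ord_max \in set_rcons A b) = b.
Proof. by rewrite inE unlift_none. Qed.

Lemma sum_ffun_rcons (T : finType) (R : nmodType) (F : {ffun 'I_r.+1 -> T} -> R) :
  \sum_g F g = \sum_(x : T) \sum_(g : {ffun 'I_r -> T}) F (ffun_rcons g x).
Proof.
rewrite pair_big /= (reindex (fun p : T * {ffun 'I_r -> T} => ffun_rcons p.2 p.1)) //.
exists (fun g : {ffun 'I_r.+1 -> T} => (g ord_max, [ffun j : 'I_r => g (lift ord_max j)])).
  move=> [x g] _ /=.
  by rewrite ffun_rcons_max; congr pair; apply/ffunP => j; rewrite ffunE ffun_rcons_lift.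
move=> g _ /=; apply/ffunP => i; rewrite ffunE.
by case: unliftP => [j ->|->]; rewrite ?ffunE.
Qed.

Lemma sum_set_rcons (R : nmodType) (F : {set 'I_r.+1} -> R) :
  \sum_A F A = \sum_(b : bool) \sum_(A : {set 'I_r}) F (set_rcons A b).
Proof.
rewrite pair_big /= (reindex (fun p : bool * {set 'I_r} => set_rcons p.2 p.1)) //.
exists (fun A : {set 'I_r.+1} => (ord_max \in A, [set j : 'I_r | lift ord_max j \in A])).
  move=> [b A] _ /=.
  by rewrite set_rcons_max; congr pair; apply/setP => j; rewrite inE set_rcons_lift.
move=> A _ /=; apply/setP => i; rewrite inE.
by case: unliftP => [j ->|->]; rewrite ?inE.
Qed.

Lemma forall_ord_recr (P : pred 'I_r.+1) :
  [forall i, P i] = [forall j : 'I_r, P (lift ord_max j)] && P ord_max.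
Proof.
apply/forallP/andP => [P_all | [/forallP P_lift P_max] i].
  by split; [apply/forallP => j|]; apply: P_all.
by case: (unliftP ord_max i) => [j ->|->].
Qed.

Lemma big_ord_recr_lift (R : Type) (idx : R) (op : Monoid.law idx) (F : 'I_r.+1 -> R) :
  \big[op/idx]_i F i = op (\big[op/idx]_(j : 'I_r) F (lift ord_max j)) (F ord_max).
Proof.
rewrite big_ord_recr /=; congr (op _ _); apply: eq_bigr => j _; congr F.
by apply: val_inj; rewrite [RHS]lift_max.
Qed.

End FfunRcons.

Definition diamond_le (b : bool) (x y : nat) : bool := if b then (x <= y)%N else (x < y)%N.

Definition diamond_weight (N e : nat) (b : bool) (x : nat) : rat :=
  if b then ((N - x)%:R)^-1 else (x%:R ^+ e)^-1.

Section DiamondCut.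
Variables (N : nat) (f : nat -> nat).

Definition diamond_steps r (A : {set 'I_r}) (n : {ffun 'I_r -> 'I_N}) : bool :=
  [forall i : 'I_r, forall j : 'I_r,
     (j == i.+1 :> nat) ==> diamond_le (i \in A) (n i) (n j)].

Definition diamond_last r (A : {set 'I_r}) (n : {ffun 'I_r -> 'I_N}) (m : nat) : bool :=
  [forall i : 'I_r, (r == i.+1) ==> diamond_le (i \in A) (n i) m].

Definition diamond_chain r (A : {set 'I_r}) (n : {ffun 'I_r -> 'I_N}) (m : nat) : bool :=
  [&& [forall i, (0 < n i)%N], diamond_steps A n & diamond_last A n m].

Definition diamond_weights r (A : {set 'I_r}) (n : {ffun 'I_r -> 'I_N}) : rat :=
  \prod_(i : 'I_r) diamond_weight N (f i) (i \in A) (n i).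

(* zeta^diamond_N of the index (f 0, ..., f (r-1)), with m acting as an extra variable
   n_(r+1) that bounds the last one; for m = N the bound is vacuous. *)
Definition zetaDcut r (m : nat) : rat :=
  \sum_(A : {set 'I_r} | A \subset [set i : 'I_r | f i == 1%N])
   \sum_(n | diamond_chain A n m) diamond_weights A n.

Lemma diamond_last_rcons r (A : {set 'I_r}) b n (x : 'I_N) m :
  diamond_last (set_rcons A b) (ffun_rcons n x) m = diamond_le b x m.
Proof.
rewrite /diamond_last forall_ord_recr set_rcons_max ffun_rcons_max eqxx implyTb.
rewrite [X in X && _](_ : _ = true) //; apply/forallP => j.
by rewrite lift_max eqSS gtn_eqF.
Qed.

Lemma diamond_steps_rcons r (A : {set 'I_r}) b n (x : 'I_N) :
  diamond_steps (set_rcons A b) (ffun_rcons n x) = diamond_steps A n && diamond_last A n x.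
Proof.
rewrite /diamond_steps forall_ord_recr [X in _ && X](_ : _ = true) ?andbT; last first.
  by apply/forallP => j; rewrite ltn_eqF.
apply/forallP/andP => [steps | [/forallP steps_n /forallP last_n] i].
  split; apply/forallP => i.
    apply/forallP => j; have := forallP (steps i) (lift ord_max j).
    by rewrite !lift_max !ffun_rcons_lift set_rcons_lift.
  have := forallP (steps i) ord_max.
  by rewrite lift_max ffun_rcons_lift set_rcons_lift ffun_rcons_max.
apply/forallP => j; case: (unliftP ord_max j) => [j' ->|->].
  by rewrite !lift_max !ffun_rcons_lift set_rcons_lift; apply: (forallP (steps_n i)).
by rewrite lift_max ffun_rcons_lift set_rcons_lift ffun_rcons_max; apply: last_n.
Qed.

Lemma diamond_chain_rcons r (A : {set 'I_r}) b n (x : 'I_N) m :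
  diamond_chain (set_rcons A b) (ffun_rcons n x) m =
  [&& diamond_chain A n x, (0 < x)%N & diamond_le b x m].
Proof.
rewrite /diamond_chain diamond_steps_rcons diamond_last_rcons forall_ord_recr.
have -> : [forall j, 0 < ffun_rcons n x (lift ord_max j)]%N = [forall j, 0 < n j]%N.
  by apply: eq_forallb => j; rewrite ffun_rcons_lift.
rewrite ffun_rcons_max.
by case: [forall j, _]; case: (0 < x)%N; case: diamond_steps; case: diamond_last.
Qed.

Lemma diamond_weights_rcons r (A : {set 'I_r}) b n (x : 'I_N) :
  diamond_weights (set_rcons A b) (ffun_rcons n x) =
  diamond_weights A n * diamond_weight N (f r) b x.
Proof.
rewrite /diamond_weights big_ord_recr_lift set_rcons_max ffun_rcons_max; congr (_ * _).
by apply: eq_bigr => j _; rewrite set_rcons_lift ffun_rcons_lift lift_max.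
Qed.

Lemma subset_set_rcons r (A : {set 'I_r}) b :
  (set_rcons A b \subset [set i : 'I_r.+1 | f i == 1%N]) =
  (A \subset [set i : 'I_r | f i == 1%N]) && (b ==> (f r == 1%N)).
Proof.
apply/subsetP/andP => [sub | [/subsetP sub /implyP hb] i].
  split; last by apply/implyP => b1; have := sub ord_max; rewrite set_rcons_max inE; apply.
  apply/subsetP => j Aj; have := sub (lift ord_max j).
  by rewrite set_rcons_lift !inE lift_max; apply.
case: (unliftP ord_max i) => [j ->|->]; rewrite ?set_rcons_lift ?set_rcons_max inE //.
by rewrite lift_max => /sub; rewrite inE.
Qed.

Lemma sum_diamond_chain_rcons r (A : {set 'I_r}) b m :
  \sum_(n | diamond_chain (set_rcons A b) n m) diamond_weights (set_rcons A b) n =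
  \sum_(x : 'I_N | (0 < x)%N && diamond_le b x m)
     diamond_weight N (f r) b x * \sum_(n | diamond_chain A n x) diamond_weights A n.
Proof.
rewrite big_mkcond sum_ffun_rcons [RHS]big_mkcond; apply: eq_bigr => x _.
under eq_bigr => n _ do rewrite diamond_chain_rcons diamond_weights_rcons.
case: ifP => _; last by rewrite big1 // => n _; rewrite andbF.
by rewrite mulr_sumr [RHS]big_mkcond; apply: eq_bigr => n _; rewrite andbT mulrC.
Qed.

Lemma zetaDcut_rcons r m :
  zetaDcut r.+1 m =
  \sum_(x : 'I_N | (0 < x < m)%N) (x%:R ^+ f r)^-1 * zetaDcut r x +
  (f r == 1%N)%:R * \sum_(x : 'I_N | (0 < x <= m)%N) ((N - x)%:R)^-1 * zetaDcut r x.
Proof.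
have split_last b : \sum_(A : {set 'I_r} | set_rcons A b \subset [set i : 'I_r.+1 | f i == 1%N])
    \sum_(n | diamond_chain (set_rcons A b) n m) diamond_weights (set_rcons A b) n =
  (b ==> (f r == 1%N))%:R *
    \sum_(x : 'I_N | (0 < x)%N && diamond_le b x m) diamond_weight N (f r) b x * zetaDcut r x.
  under eq_bigl => A do rewrite subset_set_rcons.
  case: (b ==> _); last by rewrite mul0r big_pred0 // => A; rewrite andbF.
  under eq_bigl => A do rewrite andbT.
  under eq_bigr => A _ do rewrite sum_diamond_chain_rcons.
  by rewrite mul1r exchange_big; apply: eq_bigr => x _; rewrite mulr_sumr.
by rewrite {1}/zetaDcut big_mkcond sum_set_rcons big_bool /= -!big_mkcond !split_last mul1r addrC.
Qed.

Lemma zetaDcut0 m : zetaDcut 0 m = 1.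
Proof.
have set_I0 (A : {set 'I_0}) : A = set0 by apply/setP => -[].
have ffun_I0 (n : {ffun 'I_0 -> 'I_N}) : n = ffun0 (card_ord 0) by apply/ffunP => -[].
rewrite /zetaDcut (big_pred1 set0) => [|A]; last by rewrite /= (set_I0 A) sub0set eqxx.
rewrite (big_pred1 (ffun0 (card_ord 0))) => [|n]; first by rewrite /diamond_weights big_ord0.
by rewrite /= (ffun_I0 n) eqxx; apply/and3P; split; apply/forallP => -[].
Qed.

End DiamondCut.

Lemma eq_zetaDcut N (f g : nat -> nat) r m :
  (forall i, (i < r)%N -> f i = g i) -> zetaDcut N f r m = zetaDcut N g r m.
Proof.
move=> fg; rewrite /zetaDcut (_ : [set i : 'I_r | f i == 1%N] = [set i : 'I_r | g i == 1%N]).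
  by apply: eq_bigr => A _; apply: eq_bigr => n _; apply: eq_bigr => i _; rewrite fg.
by apply/setP => i; rewrite !inE fg.
Qed.

(* [u] is the reversed index, as for [hrev]: its head is the last letter. *)
Fixpoint zetaDrec (N : nat) (u : seq nat) (m : nat) : rat :=
  if u is a :: u' then
    \sum_(x : 'I_N | (0 < x < m)%N) (x%:R ^+ a)^-1 * zetaDrec N u' x +
    (a == 1%N)%:R * \sum_(x : 'I_N | (0 < x <= m)%N) ((N - x)%:R)^-1 * zetaDrec N u' x
  else 1.

Arguments zetaDrec : simpl never.
Arguments hrev : simpl never.

Lemma zetaDrec_cons N a u m :
  zetaDrec N (a :: u) m =
  \sum_(x : 'I_N | (0 < x < m)%N) (x%:R ^+ a)^-1 * zetaDrec N u x +
  (a == 1%N)%:R * \sum_(x : 'I_N | (0 < x <= m)%N) ((N - x)%:R)^-1 * zetaDrec N u x.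
Proof. by []. Qed.

Lemma zetaDcut_rec N k m : zetaDcut N (nth 0%N k) (size k) m = zetaDrec N (rev k) m.
Proof.
elim/last_ind: k m => [|k a IHk] m; first exact: zetaDcut0.
rewrite size_rcons zetaDcut_rcons rev_rcons zetaDrec_cons nth_rcons ltnn eqxx.
have cut_k x : zetaDcut N (nth 0%N (rcons k a)) (size k) x = zetaDrec N (rev k) x.
  by rewrite -IHk; apply: eq_zetaDcut => i ik; rewrite nth_rcons ik.
by congr (_ + _ * _); apply: eq_bigr => x _; rewrite cut_k.
Qed.

Lemma zetaD_rec k N : zetaD k N = zetaDrec N (rev k) N.
Proof.
rewrite -zetaDcut_rec /zetaD /zetaDcut; apply: eq_bigr => A _.
apply: eq_big => [n | n _].
  rewrite /diamond_chain (_ : diamond_last _ _ _ = true) ?andbT //.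
  by apply/forallP => i; apply/implyP => _; rewrite /diamond_le; case: ifP => _ //; exact: ltnW.
by rewrite /diamond_weights /diamond_weight big_if.
Qed.

Lemma mulr_sum_split (R : comPzSemiRingType) (T : finType) (e : rel T)
    (P Q : pred T) (a b : T -> R) :
  (\sum_(x | P x) a x) * (\sum_(y | Q y) b y) =
  \sum_(x | P x) a x * \sum_(y | Q y && e y x) b y +
  \sum_(y | Q y) b y * \sum_(x | P x && ~~ e y x) a x.
Proof.
rewrite big_distrlr /=.
under eq_bigr => x _ do rewrite (bigID (e^~ x)) /=.
rewrite big_split /=; congr (_ + _); first by apply: eq_bigr => x _; rewrite mulr_sumr.
rewrite (exchange_big_dep Q) /= => [|x y _ /andP[]//].
apply: eq_bigr => y Qy; rewrite mulr_sumr.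
by apply: eq_big => [x | x _]; [rewrite Qy | rewrite mulrC].
Qed.

Lemma stuffle_sum_step N m (c : rat) (a d b : 'I_N -> rat) :
  (\sum_(x : 'I_N | (0 < x < m)%N) a x + c * \sum_(x : 'I_N | (0 < x <= m)%N) d x) *
    \sum_(y : 'I_N | (0 < y < m)%N) b y =
  \sum_(x : 'I_N | (0 < x < m)%N) a x * \sum_(y : 'I_N | (0 < y < x)%N) b y +
  c * \sum_(x : 'I_N | (0 < x <= m)%N) d x * \sum_(y : 'I_N | (0 < y < x)%N) b y +
  \sum_(y : 'I_N | (0 < y < m)%N) b y *
    (\sum_(x : 'I_N | (0 < x < y)%N) a x + c * \sum_(x : 'I_N | (0 < x <= y)%N) d x) +
  \sum_(x : 'I_N | (0 < x < m)%N) a x * b x.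
Proof.
rewrite mulrDl -mulrA !(mulr_sum_split (fun y x : 'I_N => (y < x)%N)).
have below (x : 'I_N) (F : 'I_N -> rat) : (x <= m)%N ->
    \sum_(y : 'I_N | (0 < y < m)%N && (y < x)%N) F y = \sum_(y : 'I_N | (0 < y < x)%N) F y.
  by move=> xm; apply: eq_bigl => y; lia.
have above_le (y : 'I_N) (F : 'I_N -> rat) : (y < m)%N ->
    \sum_(x : 'I_N | (0 < x <= m)%N && ~~ (y < x)%N) F x = \sum_(x : 'I_N | (0 < x <= y)%N) F x.
  by move=> ym; apply: eq_bigl => x; lia.
have above_lt (y : 'I_N) (F : 'I_N -> rat) : (0 < y < m)%N ->
    \sum_(x : 'I_N | (0 < x < m)%N && ~~ (y < x)%N) F x =
    \sum_(x : 'I_N | (0 < x < y)%N) F x + F y.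
  move=> ym; rewrite (bigD1 y) /=; last by lia.
  by rewrite addrC; congr (_ + _); apply: eq_bigl => x; rewrite -(inj_eq val_inj) /=; lia.
under eq_bigr => x /andP[_ xm] do rewrite below ?(ltnW xm) //.
rewrite [X in _ + X + _ = _](eq_bigr (fun y =>
    b y * (\sum_(x : 'I_N | (0 < x < y)%N) a x + a y))); last by move=> y ym; rewrite above_lt.
under [X in c * (X + _)]eq_bigr => x /andP[_ xm] do rewrite below //.
under [X in c * (_ + X)]eq_bigr => y /andP[_ ym] do rewrite above_le //.
under [X in _ + X + _ = _]eq_bigr => y _ do rewrite mulrDr.
under [X in _ = _ + X + _]eq_bigr => y _ do rewrite mulrDr mulrCA.
rewrite !big_split /= -mulr_sumr.
under [X in _ + (_ + X) + _ = _]eq_bigr => y _ do rewrite mulrC.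
ring.
Qed.

Lemma sum_zetaDrec_cons N a (s : seq (seq nat)) m :
  \sum_(w <- s) zetaDrec N (a :: w) m =
  \sum_(x : 'I_N | (0 < x < m)%N) (x%:R ^+ a)^-1 * \sum_(w <- s) zetaDrec N w x +
  (a == 1%N)%:R *
    \sum_(x : 'I_N | (0 < x <= m)%N) ((N - x)%:R)^-1 * \sum_(w <- s) zetaDrec N w x.
Proof.
under eq_bigr => w _ do rewrite zetaDrec_cons.
rewrite big_split -mulr_sumr !(exchange_big _ s).
by congr (_ + _ * _); apply: eq_bigr => x _; rewrite mulr_sumr.
Qed.

Lemma zetaDrec_cons_gt1 N a u m : (1 < a)%N ->
  zetaDrec N (a :: u) m = \sum_(x : 'I_N | (0 < x < m)%N) (x%:R ^+ a)^-1 * zetaDrec N u x.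
Proof. by move=> a_gt1; rewrite zetaDrec_cons gtn_eqF // mul0r addr0. Qed.

Lemma hrev_cons a u b v : hrev (a :: u) (b :: v) =
  [seq a :: w | w <- hrev u (b :: v)] ++ [seq b :: w | w <- hrev (a :: u) v] ++
  [seq (a + b)%N :: w | w <- hrev u v].
Proof. by []. Qed.

Lemma zetaDrec_hrev N u v m : all (fun k => 1 < k)%N v ->
  zetaDrec N u m * zetaDrec N v m = \sum_(w <- hrev u v) zetaDrec N w m.
Proof.
elim: u v m => [|a u IHu] v m v_gt1; first by rewrite big_seq1 mul1r.
elim: v m v_gt1 => [|b v IHv] m bv_gt1; first by rewrite big_seq1 mulr1.
have /andP[b_gt1 v_gt1] := bv_gt1.
have ab_gt1 : (1 < a + b)%N by rewrite ltn_addl.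
rewrite hrev_cons !big_cat !big_map /= !sum_zetaDrec_cons !addrA.
rewrite (gtn_eqF b_gt1) (gtn_eqF ab_gt1) !mul0r !addr0.
under eq_bigr => x _ do rewrite -IHu //.
under [X in _ + _ * X + _ + _]eq_bigr => x _ do rewrite -IHu //.
under [X in _ + X + _]eq_bigr => y _ do rewrite -IHv //.
under [X in _ + X]eq_bigr => x _ do rewrite -IHu //.
rewrite (zetaDrec_cons_gt1 _ _ _ b_gt1) zetaDrec_cons stuffle_sum_step.
congr (_ + _ * _ + _ + _); apply: eq_bigr => x _.
- by rewrite zetaDrec_cons_gt1 // mulrA.
- by rewrite zetaDrec_cons_gt1 // mulrA.
- by rewrite zetaDrec_cons mulrAC -mulrA.
- by rewrite exprD invfM; ring.
Qed.

Lemma sum_zetaD_harm_word u v N : word_H2 v ->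
  \sum_(w <- harm_word u v) zetaD w N = zetaD u N * zetaD v N.
Proof.
move=> v_H2; rewrite /harm_word big_map !zetaD_rec zetaDrec_hrev; last by rewrite all_rev.
by apply: eq_bigr => w _; rewrite zetaD_rec revK.
Qed.

Theorem mainTheorem10 (w1 w2 : lc) :
  in_H0 w1 -> in_H2 w2 ->
  forall N : nat, (0 < N)%N -> ZD (harm w1 w2) N = ZD w1 N * ZD w2 N.
Proof.
move=> _ w2_H2 N _.
rewrite /ZD /harm big_flatten /= big_allpairs_dep /= big_distrl /=.
apply: eq_bigr => p _; rewrite mulr_sumr [LHS]big_seq [RHS]big_seq.
apply: eq_bigr => q q_w2; rewrite big_map /= -mulr_sumr /zetaDseq.
rewrite sum_zetaD_harm_word; last exact: (allP w2_H2 q q_w2).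
by rewrite mulrACA.
Qed.
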